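(* Let $L\ge 1$ and, for each layer $\ell\in\{1,\dots,L\}$, let $K^{\ell}\ge 1$ and $d^{\ell}\ge 1$ be integers and $a^{\ell}$ a real number with $0\le a^{\ell}<1$. Consider the linear one-dimensional network on real sequences indexed by $\mathbb{Z}$ whose $\ell$-th layer maps $y^{\ell-1}$ to $y^{\ell}$ via $$y^{\ell}_i - a^{\ell}\, y^{\ell}_{i-1} = \sum_{p=0}^{K^{\ell}-1} \frac{1-a^{\ell}}{K^{\ell}}\, y^{\ell-1}_{i-d^{\ell}p}\qquad\text{for all } i\in\mathbb{Z}$$ (i.e. uniform moving-average coefficients of length $K^{\ell}$ with dilation $d^{\ell}$, and autoregressive coefficients $1,-a^{\ell}$), where $y^0$ is the network input and $y^L$ its output. Then the radius of the effective receptive field of this network satisfies $$r(\mathrm{ERF})^2 = \sum_{\ell=1}^{L}\left[\frac{(d^{\ell})^2\big((K^{\ell})^2-1\big)}{12} + \frac{a^{\ell}}{(1-a^{\ell})^2}\right].$$ In particular, when $a^{\ell}=0$ for all $\ell$ (so that each layer is an ordinary, possibly dilated, convolution), $r(\mathrm{ERF})^2=\sum_{\ell=1}^{L}(d^{\ell})^2\big((K^{\ell})^2-1\big)/12$.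
   Context: Each layer relation is interpreted as the linear map $y^{\ell}=f^{\ell}*y^{\ell-1}$, where $*$ is convolution of sequences on $\mathbb{Z}$ and $f^{\ell}=\tilde a^{\ell}*w^{\ell}$, with $w^{\ell}_{d^{\ell}p}=(1-a^{\ell})/K^{\ell}$ for $p=0,\dots,K^{\ell}-1$ (and $w^{\ell}_j=0$ otherwise) and $\tilde a^{\ell}_j=(a^{\ell})^j$ for $j\ge 0$, $\tilde a^{\ell}_j=0$ for $j<0$ (the inverse convolution of the autoregressive filter $(1,-a^{\ell})$, i.e. $y^{\ell}_i=\sum_{j\ge0}(a^{\ell})^j(w^{\ell}*y^{\ell-1})_{i-j}$). For this network the quantity $g(p)=\left|\partial y^{L}_i/\partial y^{0}_{i-p}\right|$ does not depend on $i$. The effective receptive field is the normalized distribution $\mathrm{ERF}(p)=g(p)/\sum_{q\in\mathbb{Z}} g(q)$, $p\in\mathbb{Z}$, and its radius $r(\mathrm{ERF})$ is defined by $r(\mathrm{ERF})^2=\sum_{p}p^2\,\mathrm{ERF}(p)-\big(\sum_p |p|\,\mathrm{ERF}(p)\big)^2$. *)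

From Stdlib Require Import Reals ZArith List.
From Coquelicot Require Import Coquelicot.
Open Scope R_scope.

Definition sumZ (u : Z -> R) : R :=
  Series (fun n : nat => u (Z.of_nat n)) +
  Series (fun n : nat => u (- Z.of_nat (S n))%Z).

Definition conv (f y : Z -> R) : Z -> R :=
  fun i => sumZ (fun j => f j * y (i - j)%Z).

(* Moving-average filter w: w_(d p) = (1-a)/K for p = 0..K-1, 0 otherwise. *)
Definition wfilt (K d : nat) (a : R) : Z -> R :=
  fun j => if ((0 <=? j)%Z && (Z.modulo j (Z.of_nat d) =? 0)%Z
               && (Z.div j (Z.of_nat d) <? Z.of_nat K)%Z)%bool
           then (1 - a) / INR K else 0.

(* Inverse of the autoregressive filter (1,-a): atilde_j = a^j (j >= 0), 0 (j < 0). *)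
Definition atilde (a : R) : Z -> R :=
  fun j => if (0 <=? j)%Z then a ^ (Z.to_nat j) else 0.

Definition layer_filter (K d : nat) (a : R) : Z -> R :=
  conv (atilde a) (wfilt K d a).

Fixpoint net (K d : nat -> nat) (a : nat -> R) (l : nat) (y : Z -> R) : Z -> R :=
  match l with
  | O => y
  | S l' => conv (layer_filter (K l) (d l) (a l)) (net K d a l' y)
  end.

Definition delta (k : Z) : Z -> R := fun i => if (i =? k)%Z then 1 else 0.

(* g(p) = |d y^L_i / d y^0_(i-p)| for the linear network, taken at i = 0:
   the partial derivative of a linear map is its response to a unit vector. *)
Definition gERF (K d : nat -> nat) (a : nat -> R) (L : nat) (p : Z) : R :=
  Rabs (net K d a L (delta (- p)%Z) 0%Z).

Definition ERF (K d : nat -> nat) (a : nat -> R) (L : nat) (p : Z) : R :=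
  gERF K d a L p / sumZ (gERF K d a L).

Definition radius_sq (K d : nat -> nat) (a : nat -> R) (L : nat) : R :=
  sumZ (fun p => (IZR p) ^ 2 * ERF K d a L p)
  - (sumZ (fun p => IZR (Z.abs p) * ERF K d a L p)) ^ 2.

From Stdlib Require Import Reals ZArith List Lia Lra FunctionalExtensionality.
From Coquelicot Require Import Coquelicot.
Open Scope R_scope.

(* The network is linear and shift invariant, so g is the absolute value of its
   impulse response, which is a causal sequence F on the naturals: the Cauchy product of
   the layer filters, each of which is itself the Cauchy product of the geometric
   sequence a^n with the dilated box (1-a)/K on {0, d, ..., d(K-1)}.  All of these are
   nonnegative, so g = F, and every layer filter has mass 1.  Under Cauchy products of
   nonnegative summable sequences masses multiply and, expanding
   n^2 = k^2 + 2k(n-k) + (n-k)^2, means and variances add.  Since F lives on p >= 0,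
   r(ERF)^2 is exactly the variance of F, i.e. the sum of the layer variances
   d^2 (K^2 - 1)/12 (uniform box) and a/(1-a)^2 (geometric distribution). *)

Lemma is_series_ext_eq (a b : nat -> R) (la lb : R) :
  (forall n, a n = b n) -> la = lb -> is_series a la -> is_series b lb.
Proof. intros Hab <-. apply is_series_ext, Hab. Qed.

Lemma is_series_plus_R (a b : nat -> R) (la lb : R) :
  is_series a la -> is_series b lb -> is_series (fun n => a n + b n) (la + lb).
Proof. exact (is_series_plus a b la lb). Qed.

Lemma is_series_scal_R (c : R) (a : nat -> R) (la : R) :
  is_series a la -> is_series (fun n => c * a n) (c * la).
Proof. exact (is_series_scal c a la). Qed.

Lemma is_series_finite_support (u : nat -> R) (N : nat) :
  (forall n, (N < n)%nat -> u n = 0) -> is_series u (sum_f_R0 u N).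
Proof.
  intros Hu. apply is_series_Reals. intros eps Heps. exists N. intros n Hn.
  replace (sum_f_R0 u n) with (sum_f_R0 u N).
  - unfold R_dist. rewrite Rminus_diag, Rabs_R0. exact Heps.
  - induction Hn as [|n Hn IH]; [reflexivity|].
    rewrite tech5, <- IH, Hu by lia. ring.
Qed.

Lemma is_series_zero : is_series (fun _ : nat => 0) 0.
Proof. exact (is_series_finite_support (fun _ => 0) 0 (fun _ _ => eq_refl)). Qed.

Definition impulse (m n : nat) : R := if Nat.eqb n m then 1 else 0.

Lemma is_series_impulse (h : nat -> R) (m : nat) :
  is_series (fun n => h n * impulse m n) (h m).
Proof.
  eapply is_series_ext_eq; [reflexivity | | apply (is_series_finite_support _ m)].
  - unfold impulse. destruct m as [|m]; simpl; [ring|].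
    rewrite sum_eq_R0, Nat.eqb_refl; [ring|].
    intros n Hn. replace (n =? S m)%nat with false by (symmetry; apply Nat.eqb_neq; lia). ring.
  - intros n Hn. unfold impulse.
    replace (n =? m)%nat with false by (symmetry; apply Nat.eqb_neq; lia). ring.
Qed.

Lemma fold_Rplus_seq_S (g : nat -> R) (s n : nat) :
  fold_right Rplus 0 (map g (seq s (S n))) =
  fold_right Rplus 0 (map g (seq s n)) + g (s + n)%nat.
Proof.
  rewrite seq_S, map_app, fold_right_app. simpl.
  induction (map g (seq s n)) as [|x l IH]; simpl; [ring|]. rewrite IH. ring.
Qed.

Definition cauchy_product (u v : nat -> R) (n : nat) : R :=
  sum_f_R0 (fun k => u k * v (n - k)%nat) n.

Lemma cauchy_product_ge0 (u v : nat -> R) :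
  (forall n, 0 <= u n) -> (forall n, 0 <= v n) -> forall n, 0 <= cauchy_product u v n.
Proof. intros Hu Hv n. apply cond_pos_sum. intros k. apply Rmult_le_pos; auto. Qed.

Lemma is_series_cauchy_product (u v : nat -> R) (lu lv : R) :
  (forall n, 0 <= u n) -> (forall n, 0 <= v n) ->
  is_series u lu -> is_series v lv -> is_series (cauchy_product u v) (lu * lv).
Proof. intros Hu Hv Su Sv. now apply is_series_mult_pos. Qed.

Record has_moments (u : nat -> R) (m0 m1 m2 : R) : Prop := {
  moments_ge0 : forall n, 0 <= u n;
  moments_mass : is_series u m0;
  moments_first : is_series (fun n => INR n * u n) m1;
  moments_second : is_series (fun n => INR n ^ 2 * u n) m2 }.

Lemma has_moments_eq (u : nat -> R) (m0 m1 m2 n0 n1 n2 : R) :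
  has_moments u m0 m1 m2 -> m0 = n0 -> m1 = n1 -> m2 = n2 -> has_moments u n0 n1 n2.
Proof. now intros H -> -> ->. Qed.

Lemma has_moments_scal (c : R) (u : nat -> R) (m0 m1 m2 : R) : 0 <= c ->
  has_moments u m0 m1 m2 -> has_moments (fun n => c * u n) (c * m0) (c * m1) (c * m2).
Proof.
  intros Hc [Hu U0 U1 U2]. constructor.
  - intros n. apply Rmult_le_pos; auto.
  - now apply is_series_scal_R.
  - eapply is_series_ext_eq; [| reflexivity | apply (is_series_scal_R c), U1].
    intros n; simpl; ring.
  - eapply is_series_ext_eq; [| reflexivity | apply (is_series_scal_R c), U2].
    intros n; simpl; ring.
Qed.

Lemma has_moments_cauchy_product (u v : nat -> R) (m0 m1 m2 p0 p1 p2 : R) :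
  has_moments u m0 m1 m2 -> has_moments v p0 p1 p2 ->
  has_moments (cauchy_product u v) (m0 * p0) (m1 * p0 + m0 * p1)
    (m2 * p0 + 2 * (m1 * p1) + m0 * p2).
Proof.
  intros [Hu U0 U1 U2] [Hv V0 V1 V2].
  assert (Hu1 : forall n, 0 <= INR n * u n)
    by (intros; apply Rmult_le_pos; auto using pos_INR).
  assert (Hv1 : forall n, 0 <= INR n * v n)
    by (intros; apply Rmult_le_pos; auto using pos_INR).
  assert (Hu2 : forall n, 0 <= INR n ^ 2 * u n)
    by (intros; apply Rmult_le_pos; auto using pow_le, pos_INR).
  assert (Hv2 : forall n, 0 <= INR n ^ 2 * v n)
    by (intros; apply Rmult_le_pos; auto using pow_le, pos_INR).
  constructor.
  - now apply cauchy_product_ge0.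
  - now apply is_series_cauchy_product.
  - eapply (is_series_ext_eq
      (fun n => cauchy_product (fun k => INR k * u k) v n
        + cauchy_product u (fun k => INR k * v k) n));
      [| reflexivity | apply is_series_plus_R; apply is_series_cauchy_product; auto].
    intros n; unfold cauchy_product. rewrite <- plus_sum, scal_sum. apply sum_eq.
    intros k Hk. rewrite minus_INR by exact Hk. ring.
  - eapply (is_series_ext_eq
      (fun n => cauchy_product (fun k => INR k ^ 2 * u k) v n
        + 2 * cauchy_product (fun k => INR k * u k) (fun k => INR k * v k) n
        + cauchy_product u (fun k => INR k ^ 2 * v k) n));
      [| reflexivity |].
    + intros n; unfold cauchy_product. rewrite scal_sum, <- !plus_sum, scal_sum. apply sum_eq.
      intros k Hk. rewrite minus_INR by exact Hk. ring.
    + repeat apply is_series_plus_R; try apply is_series_scal_R;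
        apply is_series_cauchy_product; auto.
Qed.

Definition geom (a : R) (n : nat) : R := a ^ n.

Lemma cauchy_product_geom_geom (a : R) (n : nat) :
  cauchy_product (geom a) (geom a) n = (INR n + 1) * a ^ n.
Proof.
  unfold cauchy_product, geom. rewrite (sum_eq _ (fun _ => a ^ n)), sum_cte, S_INR; [ring|].
  intros k Hk. rewrite <- pow_add. f_equal. lia.
Qed.

Lemma cauchy_product_geom_geom_geom (a : R) (n : nat) :
  cauchy_product (cauchy_product (geom a) (geom a)) (geom a) n
  = (INR n + 1) * (INR n + 2) / 2 * a ^ n.
Proof.
  assert (Hsum : forall m, sum_f_R0 (fun k => INR k + 1) m = (INR m + 1) * (INR m + 2) / 2).
  { induction m as [|m IH]; [simpl; field|]. rewrite tech5, IH, S_INR. field. }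
  unfold cauchy_product at 1. rewrite (sum_eq _ (fun k => (INR k + 1) * a ^ n)).
  - rewrite <- scal_sum, Hsum. ring.
  - intros k Hk. rewrite cauchy_product_geom_geom. unfold geom.
    rewrite Rmult_assoc, <- pow_add. do 2 f_equal. lia.
Qed.

(* [n^2 = 2 (n+1)(n+2)/2 - 3 (n+1) + 1], and the three sequences on the right are
   the 3rd, 2nd and 1st Cauchy powers of the geometric sequence. *)
Lemma has_moments_geom (a : R) : 0 <= a < 1 ->
  has_moments (geom a) (/ (1 - a)) (a / (1 - a) ^ 2) (a * (1 + a) / (1 - a) ^ 3).
Proof.
  intros Ha.
  assert (Hg : forall n, 0 <= geom a n) by (intros; apply pow_le; lra).
  assert (G1 : is_series (geom a) (/ (1 - a)))
    by (apply is_series_geom; rewrite Rabs_pos_eq; lra).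
  assert (Hgg := cauchy_product_ge0 _ _ Hg Hg).
  assert (G2 := is_series_cauchy_product _ _ _ _ Hg Hg G1 G1).
  assert (G3 := is_series_cauchy_product _ _ _ _ Hgg Hg G2 G1).
  constructor; [exact Hg | exact G1 | |].
  - eapply is_series_ext_eq;
      [| | apply is_series_plus_R; [exact G2 | apply (is_series_scal_R (-1)), G1]].
    + intros n; cbv beta. rewrite cauchy_product_geom_geom. unfold geom. ring.
    + field. lra.
  - eapply is_series_ext_eq; [| | apply is_series_plus_R;
      [apply is_series_plus_R; [apply (is_series_scal_R 2), G3 | apply (is_series_scal_R (-3)), G2]
      | exact G1]].
    + intros n; cbv beta.
      rewrite cauchy_product_geom_geom_geom, cauchy_product_geom_geom. unfold geom. field.
    + field. lra.
Qed.

Definition box (K d n : nat) : R :=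
  if (Nat.eqb (n mod d) 0 && Nat.ltb (n / d) K)%bool then 1 else 0.

Lemma box_S (K d n : nat) : (1 <= d)%nat ->
  box (S K) d n = box K d n + impulse (d * K) n.
Proof.
  intros Hd. unfold box, impulse.
  destruct (Nat.eqb_spec n (d * K)) as [->|Hn].
  - rewrite Nat.mul_comm, Nat.Div0.mod_mul, Nat.div_mul, Nat.eqb_refl, Nat.ltb_irrefl by lia.
    replace (K <? S K)%nat with true by (symmetry; apply Nat.ltb_lt; lia). simpl. ring.
  - pose proof (Nat.div_mod n d) as E.
    destruct (Nat.eqb_spec (n mod d) 0) as [Hr|Hr]; simpl; [|ring].
    destruct (Nat.ltb_spec (n / d) (S K)); destruct (Nat.ltb_spec (n / d) K);
      try ring; exfalso; [|lia].
    assert (n / d = K)%nat as Hq by lia. rewrite Hq, Hr in E. lia.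
Qed.

Lemma is_series_box (h : nat -> R) (K d : nat) : (1 <= d)%nat ->
  is_series (fun n => h n * box K d n)
    (fold_right Rplus 0 (map (fun p => h (d * p)%nat) (seq 0 K))).
Proof.
  intros Hd. induction K as [|K IH].
  - eapply is_series_ext_eq; [| reflexivity | exact is_series_zero].
    intros n. unfold box.
    replace (n / d <? 0)%nat with false by (symmetry; apply Nat.ltb_ge; lia).
    rewrite Bool.andb_false_r. ring.
  - rewrite fold_Rplus_seq_S.
    eapply is_series_ext_eq;
      [| reflexivity | exact (is_series_plus_R _ _ _ _ IH (is_series_impulse h (d * K)))].
    intros n. rewrite box_S by exact Hd. ring.
Qed.

Lemma has_moments_box (K d : nat) : (1 <= d)%nat ->
  has_moments (box K d) (INR K) (INR d * INR K * (INR K - 1) / 2)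
    (INR d ^ 2 * (INR K - 1) * INR K * (2 * INR K - 1) / 6).
Proof.
  intros Hd.
  assert (Hpow : forall j, is_series (fun n => INR n ^ j * box K d n)
      (fold_right Rplus 0 (map (fun p => INR (d * p) ^ j) (seq 0 K))))
    by (intros j; exact (is_series_box (fun n => INR n ^ j) K d Hd)).
  constructor.
  - intros n. unfold box. destruct (_ && _)%bool; lra.
  - eapply is_series_ext_eq; [| | exact (Hpow 0%nat)]; [intros n; simpl; ring|].
    clear Hpow. induction K as [|K IH]; [reflexivity|].
    rewrite fold_Rplus_seq_S, IH, S_INR. simpl. ring.
  - eapply is_series_ext_eq; [| | exact (Hpow 1%nat)]; [intros n; simpl; ring|].
    clear Hpow. induction K as [|K IH]; [simpl; field|].
    rewrite fold_Rplus_seq_S, IH, S_INR, mult_INR. simpl. field.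
  - eapply is_series_ext_eq; [| | exact (Hpow 2%nat)]; [reflexivity|].
    clear Hpow. induction K as [|K IH]; [simpl; field|].
    rewrite fold_Rplus_seq_S, IH, S_INR, mult_INR. simpl. field.
Qed.

Definition is_distribution (u : nat -> R) (mean var : R) : Prop :=
  has_moments u 1 mean (mean ^ 2 + var).

Lemma is_distribution_cauchy_product (u v : nat -> R) (mu nu s t : R) :
  is_distribution u mu s -> is_distribution v nu t ->
  is_distribution (cauchy_product u v) (mu + nu) (s + t).
Proof.
  intros Hu Hv.
  eapply has_moments_eq; [exact (has_moments_cauchy_product _ _ _ _ _ _ _ _ Hu Hv) | ..]; ring.
Qed.

Lemma is_distribution_impulse (m : nat) : is_distribution (impulse m) (INR m) 0.
Proof.
  constructor.
  - intros n. unfold impulse. destruct (n =? m)%nat; lra.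
  - eapply is_series_ext_eq; [| reflexivity | exact (is_series_impulse (fun _ => 1) m)].
    intros n; cbv beta. ring.
  - exact (is_series_impulse INR m).
  - eapply is_series_ext_eq;
      [reflexivity | | exact (is_series_impulse (fun n => INR n ^ 2) m)]; ring.
Qed.

Definition layer_seq (K d : nat) (a : R) : nat -> R :=
  cauchy_product (geom a) (fun n => (1 - a) / INR K * box K d n).

Definition layer_variance (K d : nat) (a : R) : R :=
  INR d ^ 2 * (INR K ^ 2 - 1) / 12 + a / (1 - a) ^ 2.

Lemma is_distribution_layer_seq (K d : nat) (a : R) :
  (1 <= K)%nat -> (1 <= d)%nat -> 0 <= a < 1 ->
  is_distribution (layer_seq K d a) (a / (1 - a) + INR d * (INR K - 1) / 2)
    (layer_variance K d a).
Proof.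
  intros HK Hd Ha.
  assert (HKr : 1 <= INR K) by exact (le_INR 1 K HK).
  assert (Hc : 0 <= (1 - a) / INR K) by (apply Rdiv_le_0_compat; lra).
  eapply has_moments_eq;
    [exact (has_moments_cauchy_product _ _ _ _ _ _ _ _
              (has_moments_geom a Ha) (has_moments_scal _ _ _ _ _ Hc (has_moments_box K d Hd)))
    | ..];
    unfold layer_variance; field; split; lra.
Qed.

Fixpoint impulse_response (K d : nat -> nat) (a : nat -> R) (l : nat) : nat -> R :=
  match l with
  | O => impulse 0
  | S l' => cauchy_product (layer_seq (K l) (d l) (a l)) (impulse_response K d a l')
  end.

Lemma is_distribution_impulse_response (K d : nat -> nat) (a : nat -> R) (l : nat) :
  (forall m, (1 <= m <= l)%nat -> (1 <= K m)%nat) ->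
  (forall m, (1 <= m <= l)%nat -> (1 <= d m)%nat) ->
  (forall m, (1 <= m <= l)%nat -> 0 <= a m < 1) ->
  exists mean, is_distribution (impulse_response K d a l) mean
    (fold_right Rplus 0 (map (fun m => layer_variance (K m) (d m) (a m)) (seq 1 l))).
Proof.
  induction l as [|l IH]; intros HK Hd Ha.
  - exists 0. exact (is_distribution_impulse 0).
  - destruct IH as [mean Hl].
    1-3: intros m Hm; (apply HK || apply Hd || apply Ha); lia.
    eexists. rewrite fold_Rplus_seq_S, Rplus_comm.
    apply is_distribution_cauchy_product; [|exact Hl].
    apply is_distribution_layer_seq; [apply HK | apply Hd | apply Ha]; lia.
Qed.

Definition causal (u : nat -> R) (z : Z) : R :=
  if (0 <=? z)%Z then u (Z.to_nat z) else 0.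

Lemma causal_of_nat (u : nat -> R) (n : nat) : causal u (Z.of_nat n) = u n.
Proof.
  unfold causal. replace (0 <=? Z.of_nat n)%Z with true by (symmetry; apply Z.leb_le; lia).
  now rewrite Nat2Z.id.
Qed.

Lemma causal_neg (u : nat -> R) (z : Z) : (z < 0)%Z -> causal u z = 0.
Proof.
  intros Hz. unfold causal. now replace (0 <=? z)%Z with false by (symmetry; apply Z.leb_gt; lia).
Qed.

Lemma causal_mul_l (w : Z -> R) (u : nat -> R) :
  (fun p => w p * causal u p) = causal (fun n => w (Z.of_nat n) * u n).
Proof.
  apply functional_extensionality. intros p. unfold causal.
  destruct (Z.leb_spec 0 p) as [Hp|Hp]; [now rewrite Z2Nat.id | ring].
Qed.

Lemma sumZ_causal (u : nat -> R) : sumZ (causal u) = Series u.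
Proof.
  unfold sumZ. rewrite (Series_ext (fun n => causal u (- Z.of_nat (S n))) (fun _ => 0))
    by (intros n; apply causal_neg; lia).
  rewrite (is_series_unique _ _ is_series_zero), Rplus_0_r.
  apply Series_ext, causal_of_nat.
Qed.

Lemma conv_causal (u v : nat -> R) : conv (causal u) (causal v) = causal (cauchy_product u v).
Proof.
  apply functional_extensionality. intros z. unfold conv, sumZ.
  rewrite (Series_ext (fun n => causal u (- Z.of_nat (S n)) * _) (fun _ => 0))
    by (intros n; rewrite causal_neg by lia; ring).
  rewrite (is_series_unique _ _ is_series_zero), Rplus_0_r.
  destruct (Z_lt_le_dec z 0) as [Hz|Hz].
  - rewrite causal_neg, (Series_ext _ (fun _ => 0))
      by (intros; rewrite ?(causal_neg v); lia || ring).
    exact (is_series_unique _ _ is_series_zero).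
  - rewrite <- (Z2Nat.id z Hz). set (m := Z.to_nat z). rewrite causal_of_nat.
    apply is_series_unique.
    eapply is_series_ext_eq; [reflexivity | | apply (is_series_finite_support _ m)].
    + unfold cauchy_product. apply sum_eq. intros k Hk.
      rewrite <- Nat2Z.inj_sub, !causal_of_nat by exact Hk. reflexivity.
    + intros n Hn. rewrite (causal_neg v) by lia. ring.
Qed.

Lemma conv_shift (f g : Z -> R) (k i : Z) :
  conv f (fun z => g (z - k)%Z) i = conv f g (i - k)%Z.
Proof.
  unfold conv, sumZ. f_equal; apply Series_ext; intros n; do 2 f_equal; ring.
Qed.

Lemma delta_causal (k i : Z) : delta k i = causal (impulse 0) (i - k).
Proof.
  unfold delta, causal, impulse.
  destruct (Z.eqb_spec i k) as [->|Hik]; [now rewrite Z.sub_diag|].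
  destruct (Z.leb_spec 0 (i - k)); [|reflexivity].
  now replace (Z.to_nat (i - k) =? 0)%nat with false by (symmetry; apply Nat.eqb_neq; lia).
Qed.

Lemma wfilt_causal (K d : nat) (a : R) : (1 <= d)%nat ->
  wfilt K d a = causal (fun n => (1 - a) / INR K * box K d n).
Proof.
  intros Hd. apply functional_extensionality. intros z. unfold wfilt, causal, box.
  destruct (Z.leb_spec 0 z) as [Hz|Hz]; simpl; [|reflexivity].
  rewrite <- (Z2Nat.id z Hz) at 1 2. set (m := Z.to_nat z).
  rewrite <- Nat2Z.inj_mod, <- Nat2Z.inj_div.
  destruct (Nat.eqb_spec (m mod d) 0); destruct (Z.eqb_spec (Z.of_nat (m mod d)) 0);
    try lia; simpl; [|ring].
  destruct (Nat.ltb_spec (m / d) K); destruct (Z.ltb_spec (Z.of_nat (m / d)) (Z.of_nat K));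
    lia || ring.
Qed.

Lemma layer_filter_causal (K d : nat) (a : R) : (1 <= d)%nat ->
  layer_filter K d a = causal (layer_seq K d a).
Proof.
  intros Hd. unfold layer_filter. rewrite wfilt_causal by exact Hd.
  exact (conv_causal (geom a) _).
Qed.

Lemma net_delta (K d : nat -> nat) (a : nat -> R) (l : nat) :
  (forall m, (1 <= m <= l)%nat -> (1 <= d m)%nat) ->
  forall k i, net K d a l (delta k) i = causal (impulse_response K d a l) (i - k).
Proof.
  induction l as [|l IH]; intros Hd k i; [apply delta_causal|].
  simpl net. rewrite layer_filter_causal by (apply Hd; lia).
  replace (net K d a l (delta k)) with (fun z => causal (impulse_response K d a l) (z - k)).
  - now rewrite conv_shift, conv_causal.
  - apply functional_extensionality. intros z. rewrite IH; [reflexivity|].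
    intros m Hm. apply Hd. lia.
Qed.

Lemma normalized_variance_causal (u : nat -> R) (m0 m1 m2 : R) :
  has_moments u m0 m1 m2 -> m0 <> 0 ->
  sumZ (fun p => IZR p ^ 2 * (causal u p / sumZ (causal u)))
  - (sumZ (fun p => IZR (Z.abs p) * (causal u p / sumZ (causal u)))) ^ 2
  = m2 / m0 - (m1 / m0) ^ 2.
Proof.
  intros [_ U0 U1 U2] Hm0.
  assert (Hweight : forall (w : Z -> R) (mw : R),
      is_series (fun n => w (Z.of_nat n) * u n) mw ->
      sumZ (fun p => w p * (causal u p / m0)) = mw / m0).
  { intros w mw Hw.
    replace (fun p => w p * (causal u p / m0)) with (fun p => (w p / m0) * causal u p)
      by (apply functional_extensionality; intros p; unfold Rdiv; ring).
    rewrite causal_mul_l, sumZ_causal. apply is_series_unique.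
    eapply is_series_ext_eq; [| | exact (is_series_scal_R (/ m0) _ _ Hw)];
      [intros n; unfold Rdiv; ring | unfold Rdiv; ring]. }
  rewrite sumZ_causal, (is_series_unique _ _ U0).
  rewrite (Hweight (fun p => IZR p ^ 2) m2), (Hweight (fun p => IZR (Z.abs p)) m1);
    [reflexivity | eapply is_series_ext_eq; [| reflexivity |] ..]; [| exact U1 | | exact U2].
  - intros n. now rewrite Z.abs_eq, <- INR_IZR_INZ by lia.
  - intros n. now rewrite <- INR_IZR_INZ.
Qed.

Theorem theorem1 (L : nat) (K d : nat -> nat) (a : nat -> R)
  (HL : (1 <= L)%nat)
  (HK : forall l, (1 <= l <= L)%nat -> (1 <= K l)%nat)
  (Hd : forall l, (1 <= l <= L)%nat -> (1 <= d l)%nat)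
  (Ha : forall l, (1 <= l <= L)%nat -> 0 <= a l < 1) :
  radius_sq K d a L =
  fold_right Rplus 0
    (map (fun l => (INR (d l)) ^ 2 * ((INR (K l)) ^ 2 - 1) / 12
                   + a l / (1 - a l) ^ 2) (seq 1 L)).
Proof.
  destruct (is_distribution_impulse_response K d a L HK Hd Ha) as [mean HF].
  assert (HgERF : gERF K d a L = causal (impulse_response K d a L)).
  { apply functional_extensionality. intros p. unfold gERF.
    rewrite net_delta by exact Hd. replace (0 - - p)%Z with p by ring.
    unfold causal. destruct (0 <=? p)%Z; [|apply Rabs_R0].
    apply Rabs_pos_eq, (moments_ge0 _ _ _ _ HF). }
  unfold radius_sq, ERF. rewrite HgERF, (normalized_variance_causal _ _ _ _ HF) by lra.
  unfold layer_variance. field.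
Qed.
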